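(* Let $(q_n)_{n\ge1}$ be the Fibonacci Quilt sequence. Then (i) $q_{n+1}=q_n+q_{n-4}$ for all $n\ge6$; (ii) $q_{n+1}=q_{n-1}+q_{n-2}$ for all $n\ge5$; (iii) $\sum_{i=1}^n q_i = q_{n+5}-6$ for all $n\ge1$.
   Context: Given an increasing sequence of positive integers $(q_i)_{i\ge1}$, an FQ-legal decomposition of an integer $m\ge0$ is an expression $m=q_{\ell_1}+q_{\ell_2}+\cdots+q_{\ell_t}$ ($t\ge0$, the empty sum representing $0$) with distinct indices $\ell_1>\ell_2>\cdots>\ell_t$ such that $|\ell_i-\ell_j|\notin\{1,3,4\}$ for all $i,j$, and $\{1,3\}\not\subset\{\ell_1,\dots,\ell_t\}$. The Fibonacci Quilt sequence is the increasing sequence of positive integers $(q_i)_{i\ge1}$ in which each $q_i$ is the smallest positive integer having no FQ-legal decomposition using only $q_1,\dots,q_{i-1}$. Its first terms are $1,2,3,4,5,7,9,12,16,21,28,37,49,\dots$. *)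

From mathcomp Require Import all_boot.
Set Implicit Arguments. Unset Strict Implicit. Unset Printing Implicit Defensive.

Definition natdist (i j : nat) : nat := (i - j) + (j - i).

(* A set of indices {l_1 > ... > l_t} is represented by a duplicate-free list
   L of (positive) indices.  FQ-legality: |l_i - l_j| not in {1,3,4} and
   {1,3} is not a subset of the index set. *)
Definition FQ_legal (L : seq nat) : bool :=
  [&& uniq L,
      all (fun i => all (fun j => natdist i j \notin [:: 1; 3; 4]) L) L &
      ~~ ((1 \in L) && (3 \in L))].

Fixpoint subseqs (T : Type) (s : seq T) : seq (seq T) :=
  if s is x :: s' then
    let r := subseqs s' in [seq x :: t | t <- r] ++ r
  else [:: [::]].

Definition FQ_repr (s : seq nat) (m : nat) : bool :=
  has (fun L => FQ_legal L && (sumn [seq nth 0 s l.-1 | l <- L] == m))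
      (subseqs (iota 1 (size s))).

(* The smallest positive integer with no FQ-legal decomposition using the
   terms of s.  (sumn s).+1 is never representable, so the search over
   1..(sumn s).+1 always succeeds; the default 0 is never used.) *)
Definition FQ_next (s : seq nat) : nat :=
  head 0 [seq m <- iota 1 (sumn s).+1 | ~~ FQ_repr s m].

Fixpoint FQ_terms (k : nat) : seq nat :=
  if k is k'.+1 then let s := FQ_terms k' in rcons s (FQ_next s) else [::].

(* The Fibonacci Quilt sequence, indexed from 1 (q 0 is a junk value 0). *)
Definition q (n : nat) : nat := nth 0 (FQ_terms n) n.-1.

From mathcomp Require Import all_boot.
From mathcomp Require Import zify.

(* The Fibonacci Quilt sequence coincides with the sequence [quilt] given by
   1, 2, 3, 4, 5 followed by quilt (n+3) = quilt (n+1) + quilt n.  For legal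
   index sets with indices at most k, the sums (a) stay below quilt (k+3),
   (b) never equal quilt (k+1), and (c) attain every value below quilt (k+1);
   by (b) and (c), quilt (k+1) is the least value with no legal decomposition
   over quilt 1, ..., quilt k, which is the rule defining q.  Each of (a)-(c)
   follows by strong induction on k, peeling off the one or two largest
   indices, which legality forces to lie far from the remaining ones; the
   small cases are settled by exhaustive search over all index sets. *)

Set Implicit Arguments.
Unset Strict Implicit.

Fixpoint quilt (n : nat) : nat :=
  match n with
  | 0 => 0 | 1 => 1 | 2 => 2 | 3 => 3 | 4 => 4 | 5 => 5
  | (k.+1 as k1).+2 => quilt k1 + quilt k
  end.

Lemma quiltS3 n : 2 <= n -> quilt n.+3 = quilt n.+1 + quilt n.
Proof. by case: n => [|[|[|n]]]. Qed.

Lemma quiltS5 n : 2 <= n -> quilt n.+4.+1 = quilt n.+4 + quilt n.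
Proof.
move=> n2; have := quiltS3 n2; have := quiltS3 (leqW n2).
by have := quiltS3 (leqW (leqW n2)); lia.
Qed.

Lemma leq_quilt n : n <= quilt n.
Proof.
elim/ltn_ind: n => -[|[|[|[|[|[|n]]]]]] // IH; rewrite quiltS3 //.
by have := IH n.+4 (ltnW _); have := IH n.+3 (ltnW (ltnW _)); lia.
Qed.

Lemma quilt_ltS n : quilt n < quilt n.+1.
Proof.
have [n6 | n6] := ltnP n 6; first by case: n n6 => [|[|[|[|[|[|]]]]]].
have [m nm] : exists m, n = m.+4 by exists (n - 4); lia.
by subst n; rewrite quiltS5; [have := leq_quilt m; lia | lia].
Qed.

Lemma quilt_lt : {homo quilt : m n / m < n}.
Proof. exact: homo_ltn ltn_trans quilt_ltS. Qed.

Lemma quilt_le : {homo quilt : m n / m <= n}.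
Proof. exact: ltnW_homo quilt_lt. Qed.

Lemma quiltSS_le_double n : quilt n.+2 <= (quilt n.+1).*2.
Proof.
have [n5 | n5] := ltnP n 5; first by case: n n5 => [|[|[|[|[|]]]]].
have [m nm] : exists m, n = m.+3 by exists (n - 3); lia.
by subst n; rewrite quiltS5; [have := @quilt_le m m.+4 (leq_addl 4 m); lia | lia].
Qed.

Lemma FQ_legal_uniq t : FQ_legal t -> uniq t.
Proof. by case/and3P. Qed.

Lemma FQ_legal_dist t x y : FQ_legal t -> x \in t -> y \in t ->
  natdist x y \notin [:: 1; 3; 4].
Proof. by case/and3P=> _ /allP Hd _ xt yt; apply: (allP (Hd x xt)). Qed.

Lemma FQ_legal_sub t u : FQ_legal t -> uniq u -> {subset u <= t} -> FQ_legal u.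
Proof.
case/and3P=> _ /allP Hd N13 Uu sub; apply/and3P; split=> //.
  by apply/allP=> x /sub xt; apply/allP=> y /sub yt; apply: (allP (Hd x xt)).
by apply: contra N13 => /andP[/sub-> /sub->].
Qed.

Lemma FQ_legal_perm t u : perm_eq t u -> FQ_legal t -> FQ_legal u.
Proof.
move=> tu Ht; apply: (FQ_legal_sub Ht); first by rewrite -(perm_uniq tu) FQ_legal_uniq.
by move=> x; rewrite (perm_mem tu).
Qed.

Lemma FQ_legal_cons k t : FQ_legal t -> (forall x, x \in t -> x + 5 <= k) ->
  FQ_legal (k :: t).
Proof.
move=> Ht gap; have kt : k \notin t by apply/negP=> /gap; lia.
apply/and3P; split; first by rewrite /= kt FQ_legal_uniq.
  apply/allP=> x; rewrite inE => /predU1P[-> | xt];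
    apply/allP=> y; rewrite inE => /predU1P[-> | yt].
  - by rewrite /natdist subnn.
  - by have := gap y yt; rewrite !inE /natdist; lia.
  - by have := gap x xt; rewrite !inE /natdist; lia.
  - exact: FQ_legal_dist Ht xt yt.
case/and3P: Ht => _ _; apply: contra; rewrite !inE.
by case: (boolP (1 \in t)) => [/gap|_]; case: (boolP (3 \in t)) => [/gap|_] //=; lia.
Qed.

Lemma mem_subseqs (T : eqType) (s t : seq T) : (t \in subseqs s) = subseq t s.
Proof.
elim: s t => [|x s IH] t /=; first by rewrite inE; case: t.
rewrite mem_cat IH; case: t => [|y t] /=; first by rewrite sub0seq orbT.
case: eqP => [-> | yx]; last by case: mapP => // -[? _ [/yx]].
have cons_inj : injective (cons x) by move=> u v [].
by rewrite (mem_map cons_inj) IH; apply/orb_idr/subseq_trans/subseq_cons.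
Qed.

Definition qsum (t : seq nat) : nat := sumn (map quilt t).

Definition indices_le (j : nat) (t : seq nat) : Prop :=
  forall x, x \in t -> 0 < x <= j.

Lemma qsum_cons x t : qsum (x :: t) = quilt x + qsum t.
Proof. by []. Qed.

Lemma qsum_perm t u : perm_eq t u -> qsum t = qsum u.
Proof. by move=> tu; apply/perm_sumn/perm_map. Qed.

Lemma FQ_legal_rem t x : FQ_legal t -> x \in t ->
  [/\ FQ_legal (rem x t), qsum t = quilt x + qsum (rem x t) &
      forall y, y \in rem x t -> y \in t /\ natdist x y \notin [:: 0; 1; 3; 4]].
Proof.
move=> Ht xt; have Ut := FQ_legal_uniq Ht.
have mem_rem y : y \in rem x t -> y != x /\ y \in t.
  by rewrite (mem_rem_uniq x Ut) inE => /andP.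
split; first by apply: (FQ_legal_sub Ht (rem_uniq x Ut)) => y /mem_rem[].
  by rewrite (qsum_perm (perm_to_rem xt)).
move=> y /mem_rem[yx yt]; split=> //.
by have := FQ_legal_dist Ht xt yt; rewrite !inE /natdist; lia.
Qed.

Lemma FQ_legal_sumsP j (P : pred nat) :
  reflect (exists t, [/\ FQ_legal t, indices_le j t & P (qsum t)])
          (has (fun u => FQ_legal u && P (qsum u)) (subseqs (iota 1 j))).
Proof.
apply: (iffP hasP) => [[u] | [t [Ht tj Pt]]].
  rewrite mem_subseqs => /mem_subseq uj /andP[Hu Pu]; exists u; split=> // x /uj.
  by rewrite mem_iota; lia.
pose u := [seq x <- iota 1 j | x \in t].
have tu : perm_eq t u.
  apply: uniq_perm; rewrite ?filter_uniq ?iota_uniq ?FQ_legal_uniq // => x.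
  by rewrite mem_filter mem_iota; case xt: (x \in t) => //; have := tj x xt; lia.
exists u; first by rewrite mem_subseqs filter_subseq.
by rewrite (FQ_legal_perm tu Ht) -(qsum_perm tu).
Qed.

Lemma qsum_lt_quilt j t : FQ_legal t -> indices_le j t -> qsum t < quilt j.+3.
Proof.
elim/ltn_ind: j t => j IH t Ht tj.
have [j7 | j7] := ltnP j 7.
  have: ~~ has (fun u => FQ_legal u && (quilt j.+3 <= qsum u)) (subseqs (iota 1 j)).
    by case: j j7 {IH tj} => [|[|[|[|[|[|[|]]]]]]] //; vm_compute.
  by rewrite ltnNge; apply: contra => le_qt; apply/FQ_legal_sumsP; exists t.
(* Successor towers [i.+4.+3] keep every index syntactically of the form
   S (... (S i)), so [lia] identifies the [quilt] terms of the recurrence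
   instances below. *)
have [i ji] : exists i, j = i.+4.+3 by exists (j - 7); lia.
subst j; have rec8 := @quiltS5 i.+3 isT.
have rec9 := @quiltS5 i.+4 isT; have rec10 := @quiltS5 i.+4.+1 isT.
case: (boolP (i.+4.+3 \in t)) => jt; last first.
  have ti : indices_le i.+4.+2 t.
    by move=> x xt; have := tj x xt; have := memPn jt x xt; lia.
  by have := IH i.+4.+2 _ _ Ht ti; have := quilt_ltS i.+4.+4.+1; lia.
have [Hr -> Hrm] := FQ_legal_rem Ht jt.
case: (boolP (i.+4.+1 \in rem i.+4.+3 t)) => j2; last first.
  have ri : indices_le i.+2 (rem i.+4.+3 t).
    move=> x xr; have := memPn j2 x xr; case/Hrm: xr => /tj.
    by rewrite !inE /natdist; lia.
  by have := IH i.+2 _ _ Hr ri; lia.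
have [Hr2 -> Hr2m] := FQ_legal_rem Hr j2.
have ri : indices_le i (rem i.+4.+1 (rem i.+4.+3 t)).
  by move=> x /Hr2m[/Hrm[/tj]]; rewrite !inE /natdist; lia.
by have := IH i _ _ Hr2 ri; lia.
Qed.

Lemma qsum_neq_quilt k t : FQ_legal t -> indices_le k t -> qsum t != quilt k.+1.
Proof.
elim/ltn_ind: k t => k IH t Ht tk.
have [k9 | k9] := ltnP k 9.
  have: ~~ has (fun u => FQ_legal u && (qsum u == quilt k.+1)) (subseqs (iota 1 k)).
    by case: k k9 {IH tk} => [|[|[|[|[|[|[|[|[|]]]]]]]]] //; vm_compute.
  apply: contra => eq_qt.
  by apply/(FQ_legal_sumsP k (pred1 (quilt k.+1))); exists t.
have [i ki] : exists i, k = i.+4.+4.+1 by exists (k - 9); lia.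
subst k; have rec10 := @quiltS5 i.+4.+1 isT; have rec10' := @quiltS3 i.+4.+3 isT.
have rec7 := @quiltS5 i.+2 isT.
case: (boolP (i.+4.+4.+1 \in t)) => kt.
  have [Hr -> Hrm] := FQ_legal_rem Ht kt.
  case: (boolP (i.+4.+3 \in rem i.+4.+4.+1 t)) => k2.
    have [_ -> _] := FQ_legal_rem Hr k2.
    by have := quilt_ltS i.+4.+1; have := quilt_ltS i.+4.+2; lia.
  have ri : indices_le i.+4 (rem i.+4.+4.+1 t).
    move=> x xr; have := memPn k2 x xr; case/Hrm: xr => /tk.
    by rewrite !inE /natdist; lia.
  by have := IH i.+4 _ _ Hr ri; lia.
case: (boolP (i.+4.+4 \in t)) => k1; last first.
  have ti : indices_le i.+4.+3 t.
    move=> x xt; have := memPn kt x xt; have := memPn k1 x xt.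
    by have := tk x xt; lia.
  by have := qsum_lt_quilt Ht ti; lia.
have [Hr -> Hrm] := FQ_legal_rem Ht k1.
case: (boolP (i.+4.+2 \in rem i.+4.+4 t)) => k3; last first.
  have ri : indices_le i.+3 (rem i.+4.+4 t).
    move=> x xr; have := memPn k3 x xr; case/Hrm: xr => xt.
    have := memPn kt x xt; have := tk x xt; rewrite !inE /natdist; lia.
  by have := qsum_lt_quilt Hr ri; have := quilt_ltS i.+4.+2; lia.
have [Hr2 -> Hr2m] := FQ_legal_rem Hr k3.
have ri : indices_le i.+1 (rem i.+4.+2 (rem i.+4.+4 t)).
  move=> x /Hr2m[/Hrm[xt]]; have := memPn kt x xt; have := tk x xt.
  by rewrite !inE /natdist; lia.
by have := IH i.+1 _ _ Hr2 ri; lia.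
Qed.

Lemma legal_qsum_exists k m : m < quilt k.+1 ->
  exists t, [/\ FQ_legal t, indices_le k t & qsum t = m].
Proof.
elim/ltn_ind: k m => k IH m mk.
have [k7 | k7] := ltnP k 7.
  have: all (fun m => has (fun u => FQ_legal u && (qsum u == m)) (subseqs (iota 1 k)))
             (iota 0 (quilt k.+1)).
    by case: k k7 {IH mk} => [|[|[|[|[|[|[|]]]]]]] //; vm_compute.
  move/allP/(_ m); rewrite mem_iota => /(_ mk)/(FQ_legal_sumsP k (pred1 m)).
  by case=> t [Ht tk /eqP tm]; exists t.
have [i ki] : exists i, k = i.+4.+3 by exists (k - 7); lia.
subst k; have rec8 := @quiltS5 i.+3 isT.
have [m_lt | m_ge] := ltnP m (quilt i.+4.+3).
  have [t [Ht ti <-]] := IH i.+4.+2 (ltnSn _) m m_lt.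
  by exists t; split=> // x /ti; lia.
have [t [Ht ti tm]] := IH i.+2 ltac:(lia) (m - quilt i.+4.+3) ltac:(lia).
exists (i.+4.+3 :: t); split.
- by apply: FQ_legal_cons Ht _ => x /ti; lia.
- by move=> x; rewrite inE => /predU1P[-> | /ti]; lia.
- by rewrite qsum_cons tm; lia.
Qed.

Definition quilt_seq (k : nat) : seq nat := mkseq (fun i => quilt i.+1) k.

Lemma FQ_repr_quilt_seqP k m :
  reflect (exists t, [/\ FQ_legal t, indices_le k t & qsum t = m])
          (FQ_repr (quilt_seq k) m).
Proof.
have -> : FQ_repr (quilt_seq k) m =
          has (fun u => FQ_legal u && pred1 m (qsum u)) (subseqs (iota 1 k)).
  rewrite /FQ_repr size_mkseq; apply: eq_in_has => u.
  rewrite mem_subseqs => /mem_subseq uk; congr (_ && (_ == _)).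
  rewrite /qsum; congr sumn; apply/eq_in_map => l /uk; rewrite mem_iota => lk.
  by rewrite nth_mkseq; [congr quilt | ]; lia.
by apply: (iffP (FQ_legal_sumsP _ _)) => -[t [Ht tk /eqP tm]]; exists t.
Qed.

Lemma sumn_quilt_seq k : quilt k.+1 <= (sumn (quilt_seq k)).+1.
Proof.
elim: k => [|k IH] //; rewrite /quilt_seq mkseqS sumn_rcons -/(quilt_seq k).
by have := quiltSS_le_double k; lia.
Qed.

Lemma head_filter_iota (p : pred nat) a b n : b <= a < b + n ->
  (forall m, b <= m < a -> ~~ p m) -> p a -> head 0 [seq m <- iota b n | p m] = a.
Proof.
elim: n b => [|n IH] b ab below pa; first lia.
have [-> | ba] := eqVneq b a; first by rewrite /= pa.
rewrite /= (negbTE (below b _)) ?IH //; try lia.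
by move=> m mb; apply: below; lia.
Qed.

Lemma FQ_next_quilt_seq k : FQ_next (quilt_seq k) = quilt k.+1.
Proof.
apply: head_filter_iota => [|m /andP[_ mk]|].
- by have := sumn_quilt_seq k; have := leq_quilt k.+1; lia.
- by rewrite negbK; apply/FQ_repr_quilt_seqP; apply: legal_qsum_exists.
- by apply/FQ_repr_quilt_seqP => -[t [Ht tk /eqP]]; apply/negP/qsum_neq_quilt.
Qed.

Lemma FQ_terms_quilt k : FQ_terms k = quilt_seq k.
Proof. by elim: k => [|k IH] //=; rewrite IH FQ_next_quilt_seq /quilt_seq mkseqS. Qed.

Lemma q_quilt n : q n = quilt n.
Proof. by rewrite /q FQ_terms_quilt; case: n => [|n] //=; rewrite nth_mkseq. Qed.

Lemma sum_quilt n : \sum_(1 <= i < n.+2) quilt i + 6 = quilt n.+4.+2.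
Proof.
elim: n => [|n IH]; first by rewrite big_nat1.
by rewrite big_nat_recr // addnAC IH (@quiltS5 n.+2).
Qed.

Theorem mainTheorem8 :
  (forall n : nat, 6 <= n -> q n.+1 = q n + q (n - 4)) /\
  (forall n : nat, 5 <= n -> q n.+1 = q n.-1 + q n.-2) /\
  (forall n : nat, 1 <= n -> \sum_(1 <= i < n.+1) q i = q (n + 5) - 6).
Proof.
split; [|split].
- move=> n n6; have [m nm] : exists m, n = m.+4 by exists (n - 4); lia.
  by subst n; rewrite !q_quilt !subSS subn0 quiltS5 //; lia.
- move=> n n5; have [m nm] : exists m, n = m.+3 by exists (n - 3); lia.
  by subst n; rewrite !q_quilt quiltS3 //; lia.
- case=> // n _; rewrite !addnS addn0 q_quilt -(sum_quilt n) addnK.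
  by apply: eq_bigr => i _; apply: q_quilt.
Qed.
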